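(* Suppose $X=\{0,1\}^n$, $R(X)=[0,1]^n$, and $Q:[0,1]^n \to \mathbb{R}$ is an extension of $Q'$ which is component-wise monotone on $[0,1]^n$, i.e., for each $i \in [n]$, $Q$ is either nondecreasing in $x_i$ or nonincreasing in $x_i$ (with the other coordinates fixed). Let $I \subseteq [n]$ be nonempty and let $\mu\in\mathbb{R}^n$, $\eta\in\mathbb{R}$ with $\mu_i=0$ for all $i\notin I$. Then the inequality $\theta\geq \mu^T \mathbf{x}+\eta$ is valid for $E=\{(\theta,\mathbf{x})\in\mathbb{R}\times X:\theta\geq Q'(\mathbf{x})\}$ if and only if it is valid for $E_I^Q$.
   Context: $Q':\{0,1\}^n\to\mathbb{R}$ is a function, and $Q$ is an extension of $Q'$ to $[0,1]^n$, i.e., $Q(\mathbf{x})=Q'(\mathbf{x})$ for $\mathbf{x}\in\{0,1\}^n$. Let $E^Q := \{(\theta,\mathbf{x}) \in \mathbb{R}\times [0,1]^n : \theta \geq Q(\mathbf{x})\}$. For $I \subseteq [n]$ and $\chi \in \{0,1\}^I$, $E_I^Q(\chi) := \{(\theta,\mathbf{x}) \in E^Q : \mathbf{x}_I = \chi\}$ and $E_I^Q := \bigcup_{\chi \in \{0,1\}^I} E_I^Q(\chi)$, where $\mathbf{x}_I$ is the subvector of $\mathbf{x}$ indexed by $I$. *)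

From mathcomp Require Import all_boot all_order all_algebra.
Set Implicit Arguments. Unset Strict Implicit. Unset Printing Implicit Defensive.
Import Order.TTheory GRing.Theory Num.Theory.
Local Open Scope ring_scope.

Section Defs.
Variables (R : realFieldType) (n : nat).

Definition in_unit_cube (x : 'I_n -> R) : Prop := forall i, 0 <= x i <= 1.

Definition bin_pt (b : 'I_n -> bool) : 'I_n -> R := fun i => (b i)%:R.

Definition upd (x : 'I_n -> R) (i : 'I_n) (t : R) : 'I_n -> R :=
  fun j => if j == i then t else x j.

Definition nondecr_in (Q : ('I_n -> R) -> R) (i : 'I_n) : Prop :=
  forall x, in_unit_cube x -> forall s t, 0 <= s -> s <= t -> t <= 1 ->
    Q (upd x i s) <= Q (upd x i t).

Definition nonincr_in (Q : ('I_n -> R) -> R) (i : 'I_n) : Prop :=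
  forall x, in_unit_cube x -> forall s t, 0 <= s -> s <= t -> t <= 1 ->
    Q (upd x i t) <= Q (upd x i s).

Definition componentwise_monotone (Q : ('I_n -> R) -> R) : Prop :=
  forall i, nondecr_in Q i \/ nonincr_in Q i.

Definition E_set (Q' : ('I_n -> bool) -> R) (theta : R) (x : 'I_n -> R) : Prop :=
  exists b, x = bin_pt b /\ Q' b <= theta.

(* E^Q_I = union over chi in {0,1}^I of E^Q_I(chi)
   = {(theta,x) in R x [0,1]^n : theta >= Q(x), x_i in {0,1} for i in I} *)
Definition EQ_I (Q : ('I_n -> R) -> R) (I : {set 'I_n})
    (theta : R) (x : 'I_n -> R) : Prop :=
  [/\ in_unit_cube x, Q x <= theta &
      exists chi : 'I_n -> bool, forall i, i \in I -> x i = (chi i)%:R].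

Definition valid_ineq (S : R -> ('I_n -> R) -> Prop) (mu : 'I_n -> R) (eta : R)
  : Prop := forall theta x, S theta x -> \sum_i mu i * x i + eta <= theta.

End Defs.
Arguments bin_pt {R n} b i.
Arguments in_unit_cube {R n} x.
Arguments upd {R n} x i t j.
Arguments componentwise_monotone {R n} Q.
Arguments E_set {R n} Q' theta x.
Arguments EQ_I {R n} Q I theta x.
Arguments valid_ineq {R n} S mu eta.

From mathcomp Require Import all_boot all_order all_algebra.
From Stdlib Require Import FunctionalExtensionality.
Set Implicit Arguments. Unset Strict Implicit. Unset Printing Implicit Defensive.
Import Order.TTheory GRing.Theory Num.Theory.
Local Open Scope ring_scope.

(* Moving one coordinate of a point of the cube to the endpoint {0,1} in the
   direction in which Q does not increase keeps Q from growing.  Doing this for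
   every coordinate outside I turns a point of E_I^Q into a binary point below
   it, at which mu^T x is unchanged since mu vanishes off I. *)

Section Rounding.
Variables (R : realFieldType) (n : nat).
Implicit Types (x y : 'I_n -> R) (Q : ('I_n -> R) -> R).

Lemma upd_id y i : upd y i (y i) = y.
Proof. by apply: functional_extensionality => j; rewrite /upd; case: eqP => [->|]. Qed.

Lemma in_unit_cube_upd y i t :
  in_unit_cube y -> 0 <= t <= 1 -> in_unit_cube (upd y i t).
Proof. by move=> Hy Ht j; rewrite /upd; case: eqP. Qed.

Lemma in_unit_cube_bin_pt b : in_unit_cube (bin_pt (R:=R) (n:=n) b).
Proof. by move=> i; rewrite /bin_pt; case: (b i); rewrite /= ?lexx ?ler01. Qed.

Lemma monotone_round_coord Q y i :
  componentwise_monotone Q -> in_unit_cube y ->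
  exists c : bool, Q (upd y i c%:R) <= Q y.
Proof.
move=> Hmono Hy; have /andP [Hy0 Hy1] := Hy i.
rewrite -{2}(upd_id y i).
by case: (Hmono i) => Hm; [exists false | exists true]; apply: Hm; rewrite ?lexx.
Qed.

Lemma monotone_round Q (s : seq 'I_n) x :
  componentwise_monotone Q -> in_unit_cube x ->
  exists y, [/\ in_unit_cube y, Q y <= Q x,
     (forall i, i \in s -> exists c : bool, y i = c%:R) &
     (forall i, i \notin s -> y i = x i)].
Proof.
move=> Hmono Hx; elim: s => [|i s [y [Hy HQ Hs Hn]]]; first by exists x.
have [c Hc] := monotone_round_coord i Hmono Hy.
exists (upd y i c%:R); split.
- by apply: in_unit_cube_upd; case: (c); rewrite /= ?lexx ?ler01.
- exact: le_trans HQ.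
- move=> j; rewrite inE /upd; case: eqP => [_|_ /= Hj]; first by exists c.
  exact: Hs.
- move=> j; rewrite inE negb_or /upd => /andP [Hji Hjs].
  by rewrite (negbTE Hji); exact: Hn.
Qed.

Lemma binary_bin_pt y :
  (forall i, exists c : bool, y i = c%:R) -> y = bin_pt (fun i => y i == 1).
Proof.
move=> Hy; apply: functional_extensionality => i; rewrite /bin_pt.
by have [[] ->] := Hy i; rewrite ?eqxx // eq_sym oner_eq0.
Qed.

End Rounding.

Lemma valid_ineq_sub (R : realFieldType) n (S T : R -> ('I_n -> R) -> Prop) mu eta :
  (forall theta x, S theta x -> T theta x) ->
  valid_ineq T mu eta -> valid_ineq S mu eta.
Proof. by move=> HST HT theta x /HST; exact: HT. Qed.

Lemma sum_supported_eq (R : realFieldType) n (I : {set 'I_n}) (mu x y : 'I_n -> R) :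
  (forall i, i \notin I -> mu i = 0) -> (forall i, i \in I -> x i = y i) ->
  \sum_i mu i * x i = \sum_i mu i * y i.
Proof.
move=> Hmu Hxy; apply: eq_bigr => i _.
by case: (boolP (i \in I)) => Hi; [rewrite Hxy | rewrite Hmu // !mul0r].
Qed.

Lemma E_set_sub_EQ_I (R : realFieldType) n (Q' : ('I_n -> bool) -> R)
    (Q : ('I_n -> R) -> R) (I : {set 'I_n}) theta x :
  (forall b, Q (bin_pt b) = Q' b) -> E_set Q' theta x -> EQ_I Q I theta x.
Proof.
move=> Hext [b [-> Hb]]; split; first exact: in_unit_cube_bin_pt.
- by rewrite Hext.
- by exists b.
Qed.

Theorem corollary1 (R : realFieldType) (n : nat)
    (Q' : ('I_n -> bool) -> R) (Q : ('I_n -> R) -> R)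
    (Hext : forall b, Q (bin_pt (R:=R) b) = Q' b)
    (Hmono : componentwise_monotone Q)
    (I : {set 'I_n}) (HI : I != set0)
    (mu : 'I_n -> R) (eta : R)
    (Hmu : forall i, i \notin I -> mu i = 0) :
  valid_ineq (E_set Q') mu eta <-> valid_ineq (EQ_I Q I) mu eta.
Proof.
split; last by apply: valid_ineq_sub => theta x; exact: E_set_sub_EQ_I.
move=> HE theta x [Hx HQx [chi Hchi]].
have [y [_ HQy Hout Hin]] := monotone_round (enum (~: I)) Hmono Hx.
have HyI i : i \in I -> y i = x i by move=> Hi; rewrite Hin // mem_enum inE Hi.
have Hybin i : exists c : bool, y i = c%:R.
  case: (boolP (i \in I)) => Hi; first by exists (chi i); rewrite HyI // Hchi.
  by apply: Hout; rewrite mem_enum inE.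
rewrite -(sum_supported_eq Hmu HyI).
have yE := binary_bin_pt Hybin.
apply: le_trans (HE (Q' (fun i => y i == 1)) y _) _.
- by exists (fun i => y i == 1); split.
- by rewrite -Hext -yE (le_trans HQy HQx).
Qed.
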